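(* Let $\mu\in\mathbb{R}$ and let $\mathbf{A}\in\mathbb{R}^{m\times n}$ be a random matrix with independent rows. Suppose that for each $1\leq i\leq n$ the $i$-th column of $\mathbf{A}$ can be written as $\mathbf{a}^{col}_i=\mathbf{a}^{col}_{0,i}+\mu\mathbf{1}$, where $\mathbf{1}\in\mathbb{R}^m$ is the all-ones vector and $\mathbf{a}^{col}_{0,i}$ is a zero-mean random vector with independent components which is $1$-subgaussian, i.e. $\mathbb{E}[\exp(t\langle\mathbf{a}^{col}_{0,i},\mathbf{v}\rangle)]\leq\exp(t^2)$ for all $\mathbf{v}\in\mathbb{R}^m$ with $\|\mathbf{v}\|_2\leq 1$ and all $t\in\mathbb{R}$. Then $\mathbf{A}\in\mathcal{M}^+$ with probability at least $1-2n\exp\left(-\frac{\mu^2 m}{16}\right)$.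
   Context: $\mathcal{M}^+$ denotes the set of matrices $\mathbf{M}\in\mathbb{R}^{m\times n}$ for which there exists $\mathbf{t}\in\mathbb{R}^m$ with $\mathbf{M}^T\mathbf{t}>\mathbf{0}$ entrywise (i.e. the row span of $\mathbf{M}$ intersects the open positive orthant). *)

From HB Require Import structures.
From mathcomp Require Import all_boot all_order all_algebra.
From mathcomp Require Import all_classical all_reals all_analysis.
Set Implicit Arguments. Unset Strict Implicit. Unset Printing Implicit Defensive.
Import Order.TTheory GRing.Theory Num.Theory.
Local Open Scope classical_set_scope.
Local Open Scope ring_scope.

Definition Mplus (R : realType) (m n : nat) (M : 'M[R]_(m, n)) : Prop :=
  exists t : 'cV[R]_m, forall j : 'I_n, 0 < (M^T *m t) j ord0.

Definition gen_sigma d (T : measurableType d) (R : realType) (J : Type)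
  (X : J -> T -> R) : set (set T) :=
  <<s [set E | exists j B, measurable B /\ E = X j @^-1` B] >>.

(* Mutual independence of the groups (X i j)_{j in J}, indexed by i in a
   finite type I: the generated sigma-algebras are mutually independent
   (product rule for every choice of events, one per sigma-algebra; since
   each sigma-algebra contains setT this covers all subfamilies). *)
Definition indep_groups d (T : measurableType d) (R : realType)
  (P : probability T R) (I : finType) (J : Type) (X : I -> J -> T -> R) : Prop :=
  forall E : I -> set T, (forall i, gen_sigma (X i) (E i)) ->
    P (\bigcap_i E i) = (\prod_(i : I) P (E i))%E.

Definition indep_rvs d (T : measurableType d) (R : realType)
  (P : probability T R) (I : finType) (X : I -> T -> R) : Prop :=
  indep_groups P (fun i (_ : unit) => X i).

From HB Require Import structures.
From mathcomp Require Import all_boot all_order all_algebra.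
From mathcomp Require Import all_classical all_reals all_analysis.
From mathcomp Require Import measurable_realfun ring lra.

(* Take t = mu 1 as witness: A^T t > 0 fails only if, for some column i,
   mu <a0_i, 1> + mu^2 m <= 0.  Applying the subgaussian moment bound in the
   unit direction -1/sqrt(m) with parameter mu sqrt(m) / 2 and Markov's
   inequality for exp, each such event has probability at most
   exp(-mu^2 m / 4), and a union bound over the n columns concludes.  The event A \in M^+ is measurable because integer witnesses
   suffice (scale a real witness and round down), which makes it a countable
   union of measurable sets. *)

Set Implicit Arguments.
Unset Strict Implicit.
Unset Printing Implicit Defensive.

Import Order.TTheory GRing.Theory Num.Theory.
Local Open Scope classical_set_scope.
Local Open Scope ring_scope.

Section Mplus_witness.
Variables (R : realType) (m n : nat).
Implicit Type M : 'M[R]_(m, n).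

Lemma MplusE M :
  Mplus M <-> exists t : 'I_m -> R, forall j, 0 < \sum_k M k j * t k.
Proof.
split=> [[t tP]|[t tP]].
- exists (fun k => t k ord0) => j.
  by have := tP j; rewrite mxE; under eq_bigr do rewrite mxE.
- exists (\col_k t k) => j.
  by rewrite mxE; under eq_bigr do rewrite !mxE; exact: tP.
Qed.

Lemma sum_floor_error_le M j (x : 'I_m -> R) :
  \sum_k M k j * (x k - (Num.floor (x k))%:~R) <= \sum_k `|M k j|.
Proof.
apply: ler_sum => k _.
have x_ge := floor_le (x k).
have x_lt : x k < (Num.floor (x k))%:~R + 1.
  by rewrite -[1]/(1%:~R) -intrD -floor_lt_int ltzD1.
apply: le_trans (ler_norm _) _; rewrite normrM ler_piMr // ger0_norm; lra.
Qed.

(* Scaling a real witness by a large N and rounding down perturbs each column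
   sum by at most the l1 norm of that column. *)
Lemma Mplus_intE M :
  Mplus M <->
  exists z : {ffun 'I_m -> int}, forall j, 0 < \sum_k M k j * (z k)%:~R.
Proof.
split=> [/MplusE [t tP]|[z zP]]; last by apply/MplusE; exists (fun k => (z k)%:~R).
pose c j := \sum_k M k j * t k.
pose l1 j := \sum_k `|M k j|.
pose N := (\max_j Num.truncn (l1 j / c j)).+1.
have l1_lt j : l1 j < N%:R * c j.
  rewrite -ltr_pdivrMr ?tP //; apply: lt_le_trans (truncnS_gt _) _.
  by rewrite ler_nat ltnS (bigD1 j) //= leq_maxl.
exists [ffun k => Num.floor (N%:R * t k)] => j.
under eq_bigr do rewrite ffunE.
have -> : \sum_k M k j * (Num.floor (N%:R * t k))%:~R = N%:R * c j -
    \sum_k M k j * (N%:R * t k - (Num.floor (N%:R * t k))%:~R).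
  by rewrite /c mulr_sumr -sumrB; apply: eq_bigr => k _; ring.
have := sum_floor_error_le M j (fun k => N%:R * t k); have := l1_lt j.
rewrite /l1 /=; lra.
Qed.

End Mplus_witness.

Section measurable_Mplus.
Context d (T : measurableType d) (R : realType) (m n : nat).

Lemma measurable_Mplus (X : 'I_m -> 'I_n -> T -> R) :
  (forall k j, measurable_fun setT (X k j)) ->
  measurable [set w | Mplus (\matrix_(k, j) X k j w)].
Proof.
move=> mX.
have -> : [set w | Mplus (\matrix_(k, j) X k j w)] =
    \bigcup_(z : {ffun 'I_m -> int}) \bigcap_(j in [set: 'I_n])
      [set w | 0 < \sum_k X k j w * (z k)%:~R].
  apply/seteqP; split=> w /=.
  - move=> /Mplus_intE [z zP]; exists z => // j _.
    by have := zP j; under eq_bigr do rewrite mxE.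
  - move=> [z _ zP]; apply/Mplus_intE; exists z => j.
    by under eq_bigr do rewrite mxE; exact: zP.
apply: countable_bigcupT_measurable => [|z]; first exact: countableP.
apply: fin_bigcap_measurable => // j _.
have msum : measurable_fun setT (fun w => \sum_k X k j w * (z k)%:~R).
  by apply: measurable_sum => k; apply: measurable_funM.
have := msum measurableT _ (measurable_itv `]0, +oo[); rewrite setTI.
by congr measurable; apply/seteqP; split=> w /=; rewrite in_itv /= andbT.
Qed.

End measurable_Mplus.

Section tail_bounds.
Context d (T : measurableType d) (R : realType).

Lemma le_measure_bigsetU (mu : {measure set T -> \bar R}) (I : Type)
    (s : seq I) (F : I -> set T) :
  (forall i, measurable (F i)) ->
  (mu (\big[setU/set0]_(i <- s) F i) <= \sum_(i <- s) mu (F i))%E.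
Proof.
move=> mF; elim: s => [|i s IHs]; first by rewrite !big_nil measure0.
rewrite !big_cons; apply: le_trans (measureU2 _ _ _) _ => //.
  exact: bigsetU_measurable.
exact: leeD.
Qed.

Lemma exponential_markov (mu : {measure set T -> \bar R}) (Y : T -> R) (c : R) :
  measurable_fun setT Y ->
  ((expR c)%:E * mu [set w | (c <= Y w)%R] <= \int[mu]_w (expR (Y w))%:E)%E.
Proof.
move=> mY.
have mE : measurable [set w | c <= Y w].
  by rewrite -[X in measurable X]setTI; exact: measurable_fun_le.
rewrite -(setIT [set w | c <= Y w]) -integral_indic //.
rewrite -(integralZl_indic measurableT (fun=> [set w | c <= Y w])) //=; last first.
  by rewrite ltNge expR_ge0.
apply: ge0_le_integral => //.
- by apply/measurable_EFinP; apply: measurable_funM => //; exact: measurable_indic.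
- by apply/measurable_EFinP; apply: measurableT_comp => //; exact: measurable_expR.
- move=> w _; rewrite lee_fin /indic.
  case: (boolP (w \in _)) => [/set_mem cY|_]; last by rewrite mulr0 expR_ge0.
  by rewrite mulr1 ler_expR.
Qed.

Definition subgaussian1 (P : probability T R) {m} (X : 'I_m -> T -> R) :=
  forall (v : 'I_m -> R) (t : R), Num.sqrt (\sum_k v k ^+ 2) <= 1 ->
    (\int[P]_w (expR (t * \sum_k X k w * v k))%:E <= (expR (t ^+ 2))%:E)%E.

Lemma subgaussian1_tail (P : probability T R) m (X : 'I_m -> T -> R)
    (v : 'I_m -> R) (t c : R) :
  (forall k, measurable_fun setT (X k)) -> subgaussian1 P X ->
  Num.sqrt (\sum_k v k ^+ 2) <= 1 ->
  (P [set w | (c <= t * \sum_k X k w * v k)%R] <= (expR (t ^+ 2 - c))%:E)%E.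
Proof.
move=> mX Xsg v1.
have mY : measurable_fun setT (fun w => t * \sum_k X k w * v k).
  apply: measurable_funM => //; apply: measurable_sum => k.
  exact: measurable_funM.
rewrite expRB EFinM muleC lee_pdivlMl ?expR_gt0 //.
exact: le_trans (exponential_markov P c mY) (Xsg v t v1).
Qed.

End tail_bounds.

Lemma norm_const_invsqrt_le1 (R : realType) m :
  Num.sqrt (\sum_(k < m) (- (Num.sqrt (m%:R : R))^-1) ^+ 2) <= 1.
Proof.
case: m => [|m]; first by rewrite big_ord0 sqrtr0 ler01.
rewrite sumr_const card_ord sqrrN exprVn sqr_sqrtr ?ler0n //.
by rewrite -[_ *+ _]mulr_natr mulVf ?pnatr_eq0 // sqrtr1.
Qed.

Section column_tail.
Context d (T : measurableType d) (R : realType) (P : probability T R).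

(* Chernoff bound in the direction -1/sqrt(m) with parameter mu sqrt(m) / 2. *)
Lemma shifted_column_tail m (a : 'I_m -> T -> R) (mu : R) :
  (forall k, measurable_fun setT (a k)) -> subgaussian1 P a ->
  (P [set w | (\sum_k (a k w + mu) * mu <= 0)%R] <=
    (expR (- (mu ^+ 2 * m%:R / 4)))%:E)%E.
Proof.
move=> ma asg.
pose s := Num.sqrt (m%:R : R).
pose v := fun _ : 'I_m => - s^-1.
have v1 : Num.sqrt (\sum_k v k ^+ 2) <= 1 := norm_const_invsqrt_le1 R m.
have sum_v w : mu * s / 2 * \sum_k a k w * v k = - (mu / 2) * \sum_k a k w.
  rewrite !mulr_sumr; apply: eq_bigr => k _.
  have s0 : s != 0 by rewrite sqrtr_eq0 -ltNge ltr0n (leq_ltn_trans _ (ltn_ord k)).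
  by rewrite /v; field.
have sum_shift w : \sum_k (a k w + mu) * mu = mu * \sum_k a k w + mu ^+ 2 * m%:R.
  rewrite (eq_bigr (fun k => mu * a k w + mu ^+ 2)) => [|k _]; last by ring.
  by rewrite big_split /= -mulr_sumr sumr_const card_ord mulr_natr.
have -> : [set w | \sum_k (a k w + mu) * mu <= 0] =
    [set w | mu ^+ 2 * m%:R / 2 <= mu * s / 2 * \sum_k a k w * v k].
  by apply/seteqP; split=> w /=; rewrite sum_v sum_shift; lra.
apply: le_trans (subgaussian1_tail _ _ ma asg v1) _.
rewrite lee_fin ler_expR /s !exprMn sqr_sqrtr ?ler0n //; lra.
Qed.

End column_tail.

Lemma le_probability_setC d (T : measurableType d) (R : realType)
    (P : probability T R) (A : set T) (x : R) :
  measurable A -> (P A <= x%:E)%E -> ((1 - x)%:E <= P (~` A))%E.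
Proof. by move=> mA PA; rewrite probability_setC // EFinB leeB. Qed.

(* The witness t = c 1 fails only if some column sum, scaled by c, is <= 0. *)
Lemma Mplus_union_bound d (T : measurableType d) (R : realType)
    (P : probability T R) m n (X : 'I_m -> 'I_n -> T -> R) (c b : R) :
  (forall k j, measurable_fun setT (X k j)) ->
  (forall j, P [set w | (\sum_k X k j w * c <= 0)%R] <= b%:E)%E ->
  ((1 - n%:R * b)%:E <= P [set w | Mplus (\matrix_(k, j) X k j w)])%E.
Proof.
move=> mX Pcol.
pose F j := [set w | \sum_k X k j w * c <= 0].
have mF j : measurable (F j).
  rewrite -[F j]setTI; apply: measurable_fun_le => //.
  by apply: measurable_sum => k; apply: measurable_funM.
have mU : measurable (\big[setU/set0]_j F j) by apply: bigsetU_measurable.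
have PU : (P (\big[setU/set0]_j F j) <= (n%:R * b)%:E)%E.
  apply: le_trans (le_measure_bigsetU _ _ mF) _.
  apply: le_trans (_ : _ <= \sum_(j < n) b%:E)%E _.
    by apply: lee_sum => j _; exact: Pcol.
  by rewrite sumEFin sumr_const card_ord mulr_natl.
apply: le_trans (le_probability_setC mU PU) _.
apply: le_measure; rewrite ?inE; [exact: measurableC | exact: measurable_Mplus |].
move=> w notF; apply/MplusE; exists (fun=> c) => j.
under eq_bigr do rewrite mxE.
by rewrite ltNge; apply/negP => Fj; apply: notF; rewrite (bigD1 j) //=; left.
Qed.

Theorem theorem5 (R : realType) (d : measure_display) (T : measurableType d)
  (P : probability T R) (m n : nat) (mu : R)
  (A : 'I_m -> 'I_n -> T -> R) (a0 : 'I_m -> 'I_n -> T -> R) :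
  (* entries of A are random variables *)
  (forall k j, measurable_fun setT (A k j)) ->
  (* A has independent rows *)
  indep_groups P A ->
  (* column decomposition a_i = a0_i + mu 1 *)
  (forall k i w, A k i w = a0 k i w + mu) ->
  (* each a0_i has independent components *)
  (forall i, indep_rvs P (fun k => a0 k i)) ->
  (* each a0_i has zero mean *)
  (forall i k, ('E_P[a0 k i] = 0)%E) ->
  (* each a0_i is 1-subgaussian *)
  (forall i (v : 'I_m -> R) (t : R), Num.sqrt (\sum_k v k ^+ 2) <= 1 ->
     (\int[P]_w (expR (t * \sum_k a0 k i w * v k))%:E <= (expR (t ^+ 2))%:E)%E) ->
  ((1 - 2 * n%:R * expR (- (mu ^+ 2 * m%:R / 16)))%:E
     <= P [set w | Mplus (\matrix_(k, j) A k j w)])%E.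
Proof.
move=> mA _ Aa0 _ _ a0sg.
have ma0 k j : measurable_fun setT (a0 k j).
  have -> : a0 k j = fun w => A k j w - mu by apply: funext => w; rewrite Aa0 addrK.
  exact: measurable_funB (mA k j) (measurable_cst mu).
have Pcol j : (P [set w | (\sum_k A k j w * mu <= 0)%R] <=
    (expR (- (mu ^+ 2 * m%:R / 4)))%:E)%E.
  under eq_set do under eq_bigr do rewrite Aa0.
  exact: shifted_column_tail (fun k => ma0 k j) (a0sg j).
apply: le_trans (Mplus_union_bound mA Pcol); rewrite lee_fin.
have e4_le : expR (- (mu ^+ 2 * m%:R / 4)) <= expR (- (mu ^+ 2 * m%:R / 16)).
  by rewrite ler_expR; have := mulr_ge0 (sqr_ge0 mu) (ler0n R m); lra.
have := ler_wpM2l (ler0n R n) e4_le.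
have : 0 <= n%:R * expR (- (mu ^+ 2 * m%:R / 16)) by rewrite mulr_ge0 ?expR_ge0.
lra.
Qed.
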